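(* Let $D$ be a Krull domain. Then the set $\mathrm{Princ}(D)$ of principal ideals of $D$ is proconstructible in $\mathcal I(D)$.
   Context: $\mathcal I(D)$ is the set of ideals of $D$ with the Zariski topology having basis of open sets $\mathcal B(x_1,\ldots,x_n):=\{I\in\mathcal I(D)\mid x_1,\ldots,x_n\in I\}$; it is a spectral space. The constructible topology is the coarsest topology in which all open quasi-compact subsets are clopen; proconstructible means closed in the constructible topology. *)

From HB Require Import structures.
From mathcomp Require Import all_boot all_order all_algebra fraction.
From mathcomp Require Import boolp classical_sets cardinality.
Set Implicit Arguments. Unset Strict Implicit. Unset Printing Implicit Defensive.
Import Order.TTheory GRing.Theory Num.Theory.
Local Open Scope ring_scope.
Local Open Scope classical_set_scope.

(* A (normalized, rank-one) discrete valuation on a field K, given by its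
   values on K^x : v (x*y) = v x + v y, v (x+y) >= min (v x) (v y),
   and v : K^x -> Z surjective. Its valuation ring is {0} u {x | v x >= 0}. *)
Definition discrete_valuation (K : fieldType) (v : K -> int) : Prop :=
  [/\ (forall x y : K, x != 0 -> y != 0 -> v (x * y) = v x + v y),
      (forall x y : K, x != 0 -> y != 0 -> x + y != 0 ->
          Order.min (v x) (v y) <= v (x + y)) &
      (forall n : int, exists x : K, x != 0 /\ v x = n)].

(* D is a Krull domain: there is a family (V_i) of DVRs of the quotient field
   K of D with D = \bigcap_i V_i and with finite character (each nonzero
   element of D is a nonunit in only finitely many V_i). *)
Definition krull_domain (D : idomainType) : Prop :=
  exists (I : Type) (v : I -> {fraction D} -> int),
    [/\ (forall i, discrete_valuation (v i)),
        (forall x : {fraction D},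
           (exists d : D, x = FracField.tofrac d) <->
           (forall i, x = 0 \/ 0 <= v i x)) &
        (forall d : D, d != 0 ->
           finite_set [set i | v i (FracField.tofrac d) != 0])].

Definition is_ideal (D : comNzRingType) (I : set D) : Prop :=
  [/\ I 0, (forall x y, I x -> I y -> I (x + y)) &
      (forall r x, I x -> I (r * x))].

Definition ideals (D : comNzRingType) : set (set D) := [set I | is_ideal I].
Arguments ideals D : clear implicits.

Definition zbasic (D : comNzRingType) (xs : seq D) : set (set D) :=
  [set I | is_ideal I /\ (forall x, x \in xs -> I x)].

Definition zariski_open (D : comNzRingType) (U : set (set D)) : Prop :=
  U `<=` ideals D /\
  forall I, U I -> exists xs : seq D, zbasic xs I /\ zbasic xs `<=` U.

Definition zariski_quasicompact (D : comNzRingType) (U : set (set D)) : Prop :=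
  U `<=` ideals D /\
  forall F : set (set (set D)), (forall W, F W -> zariski_open W) ->
    U `<=` \bigcup_(W in F) W ->
    exists G : set (set (set D)),
      [/\ G `<=` F, finite_set G & U `<=` \bigcup_(W in G) W].

Definition is_topology (T : Type) (X : set T) (Op : set (set T)) : Prop :=
  [/\ (forall W, Op W -> W `<=` X), Op X,
      (forall A B, Op A -> Op B -> Op (A `&` B)) &
      (forall F : set (set T), F `<=` Op -> Op (\bigcup_(W in F) W))].

(* open sets of the constructible topology on I(D): the coarsest topology
   on I(D) in which every Zariski open quasi-compact subset is clopen *)
Definition constructible_open (D : comNzRingType) (W : set (set D)) : Prop :=
  forall Op : set (set (set D)), is_topology (ideals D) Op ->
    (forall U, zariski_open U -> zariski_quasicompact U ->
       Op U /\ Op (ideals D `\` U)) ->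
    Op W.

Definition proconstructible (D : comNzRingType) (Y : set (set D)) : Prop :=
  Y `<=` ideals D /\ constructible_open (ideals D `\` Y).

Definition principal_ideals (D : comNzRingType) : set (set D) :=
  [set I | exists a : D, I = [set a * r | r in [set: D]]].
Arguments principal_ideals D : clear implicits.

From mathcomp Require Import all_boot all_order all_algebra fraction.
From mathcomp Require Import finmap boolp classical_sets cardinality.
From mathcomp Require Import zify.
Set Implicit Arguments. Unset Strict Implicit. Unset Printing Implicit Defensive.
Import Order.TTheory GRing.Theory Num.Theory.
Local Open Scope ring_scope.
Local Open Scope classical_set_scope.

Local Notation "x %:F" := (FracField.tofrac x).

(* Every non-principal ideal J has a constructible neighbourhood consisting of
   non-principal ideals. Pick f != 0 in J. The valuations of a divisor a of f
   lie between 0 and those of f, so they vanish off the finite support of f;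
   as they determine aD, only finitely many principal ideals contain f. J
   differs from each of them, by an element x of J outside it or an element y
   inside it but outside J. The ideals containing f and all such x and
   avoiding all such y form a constructible neighbourhood of J, and none of
   them is among those principal ideals, so none is principal. *)

Lemma finite_image_factor (T U V : Type) (A : set T) (phi : T -> U) (g : T -> V) :
  finite_set (phi @` A) ->
  (forall a b, A a -> A b -> phi a = phi b -> g a = g b) ->
  finite_set (g @` A).
Proof.
elim/Pchoice: T => T in A phi g *.
move=> finA gphi; have [->|/set0P[a0 _]] := eqVneq A set0.
  by rewrite image_set0.
pose pick u := xget a0 (A `&` phi @^-1` [set u]).
apply: (sub_finite_set _ (finite_image (g \o pick) finA)) => _ [a Aa <-].
have [Ab /= phiba] : (A `&` phi @^-1` [set phi a]) (pick (phi a)).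
  by apply: xgetPex; exists a.
by exists (phi a); [exists a | rewrite /= (gphi _ _ Ab Aa)].
Qed.

Lemma set_neq_witness (T : Type) (J K : set T) : K <> J ->
  (exists2 x, J x & ~ K x) \/ (exists2 y, K y & ~ J y).
Proof.
move=> neqKJ; have [JK|/existsNP[x /not_implyP[Jx Kx]]] := pselect (J `<=` K).
  have [KJ|/existsNP[y /not_implyP[Ky Jy]]] := pselect (K `<=` J).
    by case: neqKJ; apply/seteqP; split.
  by right; exists y.
by left; exists x.
Qed.

Lemma separating_elements (T : eqType) (J : set T) (s : seq (set T)) :
  (forall K, K \in s -> K <> J) ->
  exists xs ys : seq T,
    [/\ (forall x, x \in xs -> J x), (forall y, y \in ys -> ~ J y) &
        forall K, K \in s ->
          (exists2 x, x \in xs & ~ K x) \/ (exists2 y, y \in ys & K y)].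
Proof.
elim: s => [|K s IH] neqJ; first by exists [::], [::].
have /IH[xs [ys [Jxs Jys sep]]] : forall K', K' \in s -> K' <> J.
  by move=> K' K's; apply: neqJ; rewrite inE K's orbT.
have [[x Jx Kx]|[y Ky Jy]] := set_neq_witness (neqJ K (mem_head _ _)).
  exists (x :: xs), ys; split=> // [x'|K']; first by rewrite inE => /predU1P[->|/Jxs].
  rewrite inE => /predU1P[->|/sep[[x' x'xs Kx']|]]; [| |by right].
    by left; exists x => //; exact: mem_head.
  by left; exists x' => //; rewrite inE x'xs orbT.
exists xs, (y :: ys); split=> // [y'|K']; first by rewrite inE => /predU1P[->|/Jys].
rewrite inE => /predU1P[->|/sep[|[y' y'ys Ky']]]; [|by left|].
  by right; exists y => //; exact: mem_head.
by right; exists y' => //; rewrite inE y'ys orbT.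
Qed.

Section Ideals.
Variable R : comNzRingType.
Implicit Types (a b : R) (xs ys : seq R) (J : set R).

Definition pideal a : set R := [set a * r | r in [set: R]].

Lemma pideal_is_ideal a : is_ideal (pideal a).
Proof.
split; first by exists 0; rewrite ?mulr0.
- by move=> _ _ [r _ <-] [t _ <-]; exists (r + t); rewrite ?mulrDr.
- by move=> r _ [t _ <-]; exists (r * t); rewrite // mulrCA.
Qed.

Lemma principal_ideals_sub_ideals : principal_ideals R `<=` ideals R.
Proof. by move=> _ [a ->]; apply: pideal_is_ideal. Qed.

Lemma pideal_sub a b : pideal b a -> pideal a `<=` pideal b.
Proof. by move=> [u _ <-] _ [r _ <-]; exists (u * r); rewrite ?mulrA. Qed.

Lemma ideal_nonzero J : is_ideal J -> J <> pideal 0 -> exists2 f, J f & f != 0.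
Proof.
move=> [J0 _ _] J_neq0; apply: contrapT => /forall2NP J_eq0; apply: J_neq0.
apply/seteqP; split=> [x Jx|_ [r _ <-]]; last by rewrite mul0r.
by exists 0; rewrite // mul0r; have [//|/negP/negPn/eqP->] := J_eq0 x.
Qed.

Definition ideal_span xs : set R :=
  [set x | forall J, is_ideal J -> (forall y, y \in xs -> J y) -> J x].

Lemma zbasic_ideal_span xs : zbasic xs (ideal_span xs).
Proof.
split; last by move=> x xxs J _; apply.
split=> [J [] //|x y Sx Sy J idJ Jxs|r x Sx J idJ Jxs]; case: (idJ) => _ JD JM.
- by apply: JD; [apply: Sx | apply: Sy].
- by apply: JM; apply: Sx.
Qed.

Lemma zbasic_open xs : zariski_open (zbasic xs).
Proof. split=> [J [idJ _] // | J xsJ]; exists xs; split=> //. Qed.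

Lemma zbasic_quasicompact xs : zariski_quasicompact (zbasic xs).
Proof.
split=> [J []//|F Fopen cover].
have [W FW WS] := cover _ (zbasic_ideal_span xs).
have [ys [[_ Sys] ysW]] := (Fopen W FW).2 _ WS.
exists [set W]; split; [by move=> _ -> | exact: finite_set1 |].
move=> J [idJ Jxs]; exists W => //; apply: ysW; split=> // y /Sys; exact.
Qed.

Definition zpatch xs ys : set (set R) :=
  [set J | zbasic xs J /\ forall y, y \in ys -> ~ J y].

Lemma zpatch_constructible_open xs ys : constructible_open (zpatch xs ys).
Proof.
move=> Op [_ _ OpI _] Oqc; elim: ys => [|y ys IH].
  suff -> : zpatch xs [::] = zbasic xs.
    exact: (Oqc _ (zbasic_open _) (zbasic_quasicompact _)).1.
  by apply/seteqP; split=> J [].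
suff -> : zpatch xs (y :: ys) = zpatch xs ys `&` (ideals R `\` zbasic [:: y]).
  by apply: OpI => //; exact: (Oqc _ (zbasic_open _) (zbasic_quasicompact _)).2.
apply/seteqP; split=> J.
- move=> [[idJ Jxs] Jys]; split.
    by split=> // y' y'ys; apply: Jys; rewrite inE y'ys orbT.
  by split=> // -[_ Jy]; apply: (Jys y (mem_head _ _)); apply: Jy; rewrite inE.
- move=> [[[idJ Jxs] Jys] [_ Jy]]; split=> // y'; rewrite inE => /predU1P[-> Jy'|]; last exact: Jys.
  by apply: Jy; split=> // z; rewrite inE => /eqP->.
Qed.

Lemma constructible_open_local (W : set (set R)) :
  (forall J, W J -> exists U, [/\ constructible_open U, U J & U `<=` W]) ->
  constructible_open W.
Proof.
move=> Wloc Op topOp Oqc; case: (topOp) => _ _ _ OpU.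
suff -> : W = \bigcup_(U in [set U | constructible_open U /\ U `<=` W]) U.
  by apply: OpU => U [cU _]; exact: cU topOp Oqc.
apply/seteqP; split=> [J /Wloc[U [cU UJ UW]]|J [U [_ UW] /UW]] //.
by exists U.
Qed.

End Ideals.

Section KrullValuations.
Variables (D : idomainType) (I : Type) (v : I -> {fraction D} -> int).
Hypothesis v_discrete : forall i, discrete_valuation (v i).
Hypothesis v_integral : forall x : {fraction D},
  (exists d : D, x = d%:F) <-> (forall i, x = 0 \/ 0 <= v i x).

Lemma valuation_tofrac_ge0 i (d : D) : d != 0 -> 0 <= v i d%:F.
Proof.
move=> d0; have [/eqP|//] := (v_integral d%:F).1 (ex_intro _ d erefl) i.
by rewrite tofrac_eq0 (negPf d0).
Qed.

Lemma valuation_tofracM i (a b : D) :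
  a != 0 -> b != 0 -> v i (a * b)%:F = v i a%:F + v i b%:F.
Proof. by move=> a0 b0; have [vM _ _] := v_discrete i; rewrite tofracM vM ?tofrac_eq0. Qed.

Lemma valuation_le_pideal (a b : D) :
  b != 0 -> (forall i, v i b%:F <= v i a%:F) -> pideal b a.
Proof.
move=> b0 le_ba; have [->|a0] := eqVneq a 0; first by exists 0; rewrite ?mulr0.
have [bF0 aF0] : b%:F != 0 /\ a%:F != 0 by rewrite !tofrac_eq0.
have [u uE] : exists u : D, a%:F / b%:F = u%:F.
  apply/v_integral => i; right; have [vM _ _] := v_discrete i.
  have := vM _ _ bF0 (mulf_neq0 aF0 (invr_neq0 bF0)).
  by rewrite mulrCA mulfV // mulr1 -(lerDl (v i b%:F)) => <-.
by exists u => //; apply/eqP; rewrite -tofrac_eq tofracM -uE mulrCA mulfV // mulr1.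
Qed.

Lemma pideal_eq_valuation (a b : D) : a != 0 -> b != 0 ->
  (forall i, v i a%:F = v i b%:F) -> pideal a = pideal b.
Proof.
move=> a0 b0 vab; apply/seteqP; split; apply: pideal_sub;
  by apply: valuation_le_pideal => // i; rewrite vab.
Qed.

Lemma pideal_divisor_neq0 (a f : D) : f != 0 -> pideal a f -> a != 0.
Proof. by move=> f0 [r _ arf]; apply: contra_neq f0 => a0; rewrite -arf a0 mul0r. Qed.

Lemma valuation_divisor_bounds i (a f : D) :
  f != 0 -> pideal a f -> 0 <= v i a%:F <= v i f%:F.
Proof.
move=> f0 af; have a0 := pideal_divisor_neq0 f0 af; case: af => r _ arf.
have r0 : r != 0 by apply: contra_neq f0 => r0; rewrite -arf r0 mulr0.
rewrite -arf valuation_tofracM // valuation_tofrac_ge0 //=.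
by have := valuation_tofrac_ge0 i r0; lia.
Qed.

Lemma finite_principal_overideals (f : D) : f != 0 ->
  finite_set [set i | v i f%:F != 0] ->
  finite_set [set J | principal_ideals D J /\ J f].
Proof.
move=> f0 /(@finite_fsetP {classic I})[X XE].
pose N := (\max_(x : X) absz (v (val x) f%:F))%N.
(* Off X the valuations of divisors of f vanish, and on X they lie in [0, N],
   where inord is injective. *)
pose profile (a : D) : {ffun X -> 'I_N.+1} :=
  [ffun x : X => inord (absz (v (val x) a%:F)) : 'I_N.+1].
have -> : [set J | principal_ideals D J /\ J f] =
          [set pideal a | a in [set a | pideal a f]].
  by apply/seteqP; split=> [J [[a ->] Jf]|_ [a af <-]]; [exists a | split; [exists a|]].
apply: (@finite_image_factor _ _ _ _ profile) => // a b af bf /ffunP profile_ab.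
apply: pideal_eq_valuation => [||i]; [exact: pideal_divisor_neq0 af|exact: pideal_divisor_neq0 bf|].
have /andP[a_ge0 a_le] := valuation_divisor_bounds i f0 af.
have /andP[b_ge0 b_le] := valuation_divisor_bounds i f0 bf.
have [vf0|vf0] := eqVneq (v i f%:F) 0; first by lia.
have iX : [set` X] i by rewrite -XE.
have fN : (absz (v i f%:F) <= N)%N := leq_bigmax (FSetSub iX).
by move: (profile_ab (FSetSub iX)) => /(congr1 val); rewrite !ffunE /= !inordK; lia.
Qed.

End KrullValuations.

Lemma krull_finite_principal_overideals (D : idomainType) : krull_domain D ->
  forall f : D, f != 0 -> finite_set [set J | principal_ideals D J /\ J f].
Proof.
move=> [I [v [v_discrete v_integral v_finite]]] f f0.
exact: finite_principal_overideals v_discrete v_integral f f0 (v_finite f f0).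
Qed.

Theorem theorem5p11 (D : idomainType) :
  krull_domain D -> proconstructible (principal_ideals D).
Proof.
move=> krullD; split; first exact: principal_ideals_sub_ideals.
apply: constructible_open_local => J [idJ nprJ].
have [f Jf f0] : exists2 f, J f & f != 0.
  by apply: ideal_nonzero => // J0; apply: nprJ; exists 0.
have /finite_seqP[s sE] := krull_finite_principal_overideals krullD f0.
have [|xs [ys [Jxs Jys sep]]] := @separating_elements _ J s.
  move=> K Ks KJ; have [prK _] : [set J | principal_ideals D J /\ J f] K by rewrite sE.
  by apply: nprJ; rewrite -KJ.
exists (zpatch (f :: xs) ys); split; first exact: zpatch_constructible_open.
  by split=> //; split=> // x; rewrite inE => /predU1P[->|/Jxs].
move=> K [[idK Kfxs] Kys]; split=> // prK.
have /sep[[x xxs Kx]|[y yys Ky]] : [set` s] K.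
  by rewrite -sE; split=> //; apply: Kfxs; exact: mem_head.
  by apply: Kx; apply: Kfxs; rewrite inE xxs orbT.
exact: Kys yys Ky.
Qed.
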